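(* Let $V$ be a vector space of countably infinite dimension over a field $\mathbb{F}$ and $u$ an endomorphism of $V$. Assume that $V^u=V_1\oplus V_2$ (direct sum of submodules), where $V_1$ is a non-zero free monogenous $\mathbb{F}[t]$-module and $u$ induces a scalar multiple of the identity on $V_2$. Let $x$ be a generator of $V_1$ and $a\in\mathbb{F}$. Then there exists an endomorphism $v$ of $V$ such that $v^2=av$ and, setting $u':=u-v$, one has $V=\operatorname{Span}\bigl((u')^k(x)\bigr)_{k\in\mathbb{N}}$.
   Context: $V^u$ is the $\mathbb{F}[t]$-module with underlying space $V$ and $t\cdot x:=u(x)$; a module is monogenous if it is generated by one element. *)

From HB Require Import structures.
From mathcomp Require Import all_boot all_order all_algebra.
Set Implicit Arguments. Unset Strict Implicit. Unset Printing Implicit Defensive.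
Import GRing.Theory.
Local Open Scope ring_scope.

Section Defs.
Variables (F : fieldType) (V : lmodType F).

Definition span_fam (f : nat -> V) : V -> Prop :=
  fun y => exists (n : nat) (c : 'I_n -> F), y = \sum_(i < n) c i *: f i.

Definition free_fam (f : nat -> V) : Prop :=
  forall (n : nat) (c : 'I_n -> F),
    \sum_(i < n) c i *: f i = 0 -> forall i, c i = 0.

Definition countably_infinite_dim : Prop :=
  exists e : nat -> V, free_fam e /\ forall y, span_fam e y.

Definition polyact (u : V -> V) (p : {poly F}) (y : V) : V :=
  \sum_(i < size p) p`_i *: iter i u y.

Definition submodule_u (u : V -> V) (W : V -> Prop) : Prop :=
  [/\ W 0, (forall y z, W y -> W z -> W (y + z)),
      (forall (c : F) y, W y -> W (c *: y)) & (forall y, W y -> W (u y))].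

Definition generated_by (u : V -> V) (W : V -> Prop) (x : V) : Prop :=
  forall y, W y <-> exists p : {poly F}, y = polyact u p x.

Definition free_monogenous_nonzero (u : V -> V) (W : V -> Prop) : Prop :=
  exists y : V, generated_by u W y /\
    (forall p : {poly F}, polyact u p y = 0 -> p = 0).

Definition direct_sum_u (u : V -> V) (W1 W2 : V -> Prop) : Prop :=
  [/\ submodule_u u W1, submodule_u u W2,
      (forall y, exists y1 y2, [/\ W1 y1, W2 y2 & y = y1 + y2]) &
      (forall y, W1 y -> W2 y -> y = 0)].

End Defs.

From HB Require Import structures.
From mathcomp Require Import all_boot all_order all_algebra zify.
From Stdlib Require Import ClassicalEpsilon.

Set Implicit Arguments.
Unset Strict Implicit.
Unset Printing Implicit Defensive.
Import GRing.Theory.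
Local Open Scope ring_scope.

(* Write e_i = u^i x, a basis of V_1, and choose a sequence (f_k) in V_2 whose
   nonzero terms form a basis of V_2 (V has countable dimension). Put
   b_k = (a - 1) e_{2k} + e_{2k+1} + f_k and let v send e_{2k} and f_k to b_k
   when f_k <> 0, and kill all other basis vectors. Then v b_k = a b_k, so
   v^2 = a v. If u = lam on V_2, then u' = u - v satisfies
   u' e_{2k} = -(a - 1) e_{2k} - f_k, u' f_k = lam f_k - b_k and
   u' e_{2k+1} = e_{2k+2}: the u'-orbit of x successively reaches f_k,
   e_{2k+1} and e_{2k+2}, hence spans V. *)

Section Spans.
Variables (F : fieldType) (V : lmodType F).
Implicit Types (S : V -> Prop) (h : nat -> V) (c : nat -> F).

Definition subspace S := S 0 /\ forall a y z, S y -> S z -> S (a *: y + z).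

Lemma subspaceD S y z : subspace S -> S y -> S z -> S (y + z).
Proof. by case=> _ Slin Sy Sz; rewrite -[y]scale1r; apply: Slin. Qed.

Lemma subspaceZ S a y : subspace S -> S y -> S (a *: y).
Proof. by case=> S0 Slin Sy; rewrite -[_ *: y]addr0; apply: Slin. Qed.

Lemma subspaceB S y z : subspace S -> S y -> S z -> S (y - z).
Proof.
by move=> SS Sy Sz; rewrite -scaleN1r; apply: subspaceD => //; apply: subspaceZ.
Qed.

Lemma subspace_sum S n (G : nat -> V) :
  subspace S -> (forall i, (i < n)%N -> S (G i)) -> S (\sum_(i < n) G i).
Proof.
move=> SS; elim: n => [|n IHn] SG; first by rewrite big_ord0; case: SS.
rewrite big_ord_recr /=; apply: subspaceD => //; last exact: SG.
by apply: IHn => i lt_in; apply/SG/ltnW.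
Qed.

Lemma submodule_subspace (u : V -> V) S : submodule_u u S -> subspace S.
Proof.
by case=> S0 SD SZ _; split=> // a y z Sy Sz; apply: SD => //; apply: SZ.
Qed.

Lemma span_famP h y :
  span_fam h y <-> exists n c, y = \sum_(i < n) c i *: h i.
Proof.
split=> [[[|n] [c ->]] | [n [c ->]]]; last by exists n, (fun i : 'I_n => c i).
  by exists 0%N, (fun _ => 0); rewrite !big_ord0.
by exists n.+1, (fun i => c (inord i)); apply: eq_bigr => i _; rewrite inord_val.
Qed.

Definition truncate c n : nat -> F := fun i => if (i < n)%N then c i else 0.

Lemma sum_truncate {W : lmodType F} c (g : nat -> W) {n N : nat} : (n <= N)%N ->
  \sum_(i < n) c i *: g i = \sum_(i < N) truncate c n i *: g i.
Proof.
move=> le_nN; rewrite (big_ord_widen N (fun i => c i *: g i) le_nN) big_mkcond.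
by apply: eq_bigr => i _; rewrite /truncate; case: ifP; rewrite ?scale0r.
Qed.

Lemma sum_scale_combine {W : lmodType F} a c (d : nat -> F) (g : nat -> W) n :
  a *: \sum_(i < n) c i *: g i + \sum_(i < n) d i *: g i =
  \sum_(i < n) (a * c i + d i) *: g i.
Proof.
rewrite scaler_sumr -big_split; apply: eq_bigr => i _.
by rewrite scalerDl scalerA.
Qed.

Lemma sum_delta {W : lmodType F} (g : nat -> W) i :
  \sum_(j < i.+1) (j == i :> nat)%:R *: g j = g i.
Proof.
rewrite big_ord_recr /= eqxx scale1r big1 ?add0r // => j _.
by rewrite (ltn_eqF (ltn_ord j)) scale0r.
Qed.

Lemma span_fam_subspace h : subspace (span_fam h).
Proof.
split=> [|a y z]; first by apply/span_famP; exists 0%N, (fun _ => 0); rewrite big_ord0.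
move=> /span_famP[n [c ->]] /span_famP[m [d ->]]; apply/span_famP.
rewrite (sum_truncate c h (leq_maxl n m)) (sum_truncate d h (leq_maxr n m)).
rewrite sum_scale_combine.
by exists (maxn n m), (fun i => a * truncate c n i + truncate d m i).
Qed.

Lemma span_fam_mem h i : span_fam h (h i).
Proof. by apply/span_famP; exists i.+1, (fun j => (j == i)%:R); rewrite sum_delta. Qed.

Lemma span_fam_min S h y :
  subspace S -> (forall i, S (h i)) -> span_fam h y -> S y.
Proof.
move=> SS Sh /span_famP[n [c ->]].
by apply: (subspace_sum (G := fun i => c i *: h i) SS) => i _; apply: subspaceZ.
Qed.

Lemma span_orbit_stable (phi : {linear V -> V}) x y :
  span_fam (fun k => iter k phi x) y -> span_fam (fun k => iter k phi x) (phi y).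
Proof.
have S := span_fam_subspace (fun k => iter k phi x).
have S' : subspace (fun z => span_fam (fun k => iter k phi x) (phi z)).
  split=> [|a z1 z2 Sz1 Sz2]; first by rewrite linear0; case: S.
  by rewrite linearP; case: S => _; apply.
by apply: span_fam_min S' _ => k; apply: (span_fam_mem _ k.+1).
Qed.

End Spans.

Section SparseBases.
Variables (F : fieldType) (V : lmodType F).
Implicit Types (e f g h : nat -> V) (c : nat -> F).

(* Zero terms are allowed, so that finite-dimensional spaces such as V_2 also
   get bases indexed by nat. *)
Definition sparse_free h := forall n c,
  \sum_(i < n) c i *: h i = 0 -> forall i, (i < n)%N -> c i *: h i = 0.

Lemma linear_extension (W : lmodType F) h (w : nat -> W) :
  sparse_free h -> (forall y, span_fam h y) -> (forall i, h i = 0 -> w i = 0) ->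
  {v : {linear V -> W} | forall i, v (h i) = w i}.
Proof.
move=> h_free h_span hw.
have coef_eq n c (d : nat -> F) :
    \sum_(i < n) c i *: h i = \sum_(i < n) d i *: h i ->
    \sum_(i < n) c i *: w i = \sum_(i < n) d i *: w i.
  move=> /eqP; rewrite -subr_eq0 -sumrB => /eqP.
  under eq_bigr do rewrite -scalerBl.
  move=> /(h_free n (fun i => c i - d i)) cdh0.
  apply/eqP; rewrite -subr_eq0 -sumrB; apply/eqP/big1 => i _; rewrite -scalerBl.
  have [/hw -> | hi_neq0] := eqVneq (h i) 0; first exact: scaler0.
  have /eqP := cdh0 i (ltn_ord i).
  by rewrite scaler_eq0 (negbTE hi_neq0) orbF => /eqP ->; rewrite scale0r.
have rep y : {nc : nat * (nat -> F) | y = \sum_(i < nc.1) nc.2 i *: h i}.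
  apply: constructive_indefinite_description.
  by have /span_famP[n [c ->]] := h_span y; exists (n, c).
pose L y := \sum_(i < (sval (rep y)).1) (sval (rep y)).2 i *: w i.
have LE n (c : nat -> F) : L (\sum_(i < n) c i *: h i) = \sum_(i < n) c i *: w i.
  rewrite /L; case: (rep _) => [[m d]] /= hE.
  rewrite (sum_truncate d w (leq_maxl m n)) (sum_truncate c w (leq_maxr m n)).
  by apply: coef_eq; rewrite -!sum_truncate ?leq_maxl ?leq_maxr.
have L_linear : linear L.
  move=> a y z; case/span_famP: (h_span y) => n [c ->].
  case/span_famP: (h_span z) => m [d ->].
  rewrite (sum_truncate c h (leq_maxl n m)) (sum_truncate d h (leq_maxr n m)).
  rewrite sum_scale_combine !LE sum_scale_combine.
  exact: (LE _ (fun i => a * truncate c n i + truncate d m i)).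
pose v : {linear V -> W} := HB.pack L (GRing.isLinear.Build _ _ _ _ L L_linear).
exists v => i /=.
by have := LE i.+1 (fun j => (j == i)%:R); rewrite !sum_delta.
Qed.

Definition in_prefix_span h k := exists c, h k = \sum_(i < k) c i *: h i.

Definition sift h k :=
  if excluded_middle_informative (in_prefix_span h k) then 0 else h k.

Lemma sift_eq0_or_eq h k : sift h k = 0 \/ sift h k = h k.
Proof. by rewrite /sift; case: excluded_middle_informative; [left | right]. Qed.

Lemma span_sift h k : span_fam (sift h) (h k).
Proof.
elim/ltn_ind: k => k IHk.
case: (excluded_middle_informative (in_prefix_span h k)) => [[c ->] | not_prefix].
  apply: (subspace_sum (G := fun i => c i *: h i) (span_fam_subspace _)) => i lt_ik.
  exact: subspaceZ (span_fam_subspace _) (IHk i lt_ik).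
by have := span_fam_mem (sift h) k; rewrite /sift; case: excluded_middle_informative.
Qed.

Lemma sift_neq0 h k : sift h k != 0 -> sift h k = h k /\ ~ in_prefix_span h k.
Proof. by rewrite /sift; case: excluded_middle_informative => [_ | ?] /=; rewrite ?eqxx. Qed.

Lemma sparse_free_sift h : sparse_free (sift h).
Proof.
have sift_scale a i : a *: sift h i =
    (if excluded_middle_informative (in_prefix_span h i) then 0 else a) *: h i.
  by rewrite /sift; case: excluded_middle_informative => _ /=; rewrite ?scaler0 ?scale0r.
elim=> [|n IHn] c; first by move=> _ i; rewrite ltn0.
rewrite big_ord_recr /= => sum0.
suff last0 : c n *: sift h n = 0.
  move: sum0; rewrite last0 addr0 => /IHn sum0 i.
  by rewrite ltnS leq_eqVlt => /predU1P[-> // | /sum0].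
have [-> | cn_neq0] := eqVneq (c n) 0; first by rewrite scale0r.
have [-> | /sift_neq0[sift_n not_prefix]] := eqVneq (sift h n) 0; first by rewrite scaler0.
exfalso; apply: not_prefix.
exists (fun i => - (c n)^-1 *
  (if excluded_middle_informative (in_prefix_span h i) then 0 else c i)).
have sum_eq : \sum_(i < n) c i *: sift h i = - (c n *: h n).
  by apply/eqP; rewrite -addr_eq0 -sift_n; apply/eqP.
under eq_bigr do rewrite -scalerA -sift_scale.
by rewrite -scaler_sumr sum_eq scalerN scaleNr opprK scalerA mulVf // scale1r.
Qed.

Definition interleave {T : Type} (e f : nat -> T) j := if odd j then f j./2 else e j./2.

Lemma interleave_double {T : Type} (e f : nat -> T) i : interleave e f i.*2 = e i.
Proof. by rewrite /interleave odd_double doubleK. Qed.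

Lemma interleave_doubleS {T : Type} (e f : nat -> T) i : interleave e f i.*2.+1 = f i.
Proof. by rewrite /interleave /= odd_double /= uphalf_double. Qed.

Lemma sum_ord_double {W : zmodType} (G : nat -> W) n :
  \sum_(j < n.*2) G j = \sum_(i < n) (G i.*2 + G i.*2.+1).
Proof.
elim: n => [|n IHn]; first by rewrite !big_ord0.
by rewrite doubleS !big_ord_recr /= IHn addrA.
Qed.

Lemma sparse_free_interleave (W1 W2 : V -> Prop) e f :
  subspace W1 -> subspace W2 -> (forall y, W1 y -> W2 y -> y = 0) ->
  (forall i, W1 (e i)) -> (forall i, W2 (f i)) ->
  sparse_free e -> sparse_free f -> sparse_free (interleave e f).
Proof.
move=> S1 S2 W12 eW1 fW2 e_free f_free n c.
rewrite (sum_truncate c _ (leq_addr n n)) addnn; set c' := truncate c n.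
rewrite (sum_ord_double (fun j => c' j *: interleave e f j)) big_split /=.
under eq_bigr do rewrite interleave_double.
under [X in _ + X]eq_bigr do rewrite interleave_doubleS.
move=> /eqP; rewrite addr_eq0 => /eqP sum_eq.
have sum_e0 : \sum_(i < n) c' i.*2 *: e i = 0.
  apply: W12.
    by apply: (subspace_sum (G := fun i => c' i.*2 *: e i) S1) => i _; apply: subspaceZ.
  rewrite sum_eq -scaleN1r; apply: subspaceZ => //.
  by apply: (subspace_sum (G := fun i => c' i.*2.+1 *: f i) S2) => i _; apply: subspaceZ.
move: sum_eq; rewrite sum_e0 => /eqP; rewrite eq_sym oppr_eq0 => /eqP sum_f0.
move=> j lt_jn; have lt_half : (j./2 < n)%N by lia.
have -> : c j = c' j by rewrite /c' /truncate lt_jn.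
rewrite -[j]odd_double_half; case: (odd j); rewrite ?add1n ?add0n.
  by rewrite interleave_doubleS; apply: (f_free n (fun i => c' i.*2.+1)).
by rewrite interleave_double; apply: (e_free n (fun i => c' i.*2)).
Qed.

Lemma span_interleave e f y z :
  span_fam e y -> span_fam f z -> span_fam (interleave e f) (y + z).
Proof.
have Sh := span_fam_subspace (interleave e f).
move=> /(span_fam_min Sh) ey /(span_fam_min Sh) fz; apply: subspaceD => //.
  by apply: ey => i; rewrite -(interleave_double e f); apply: span_fam_mem.
by apply: fz => i; rewrite -(interleave_doubleS e f); apply: span_fam_mem.
Qed.

Lemma span_summand (W1 W2 : V -> Prop) g :
  subspace W1 -> subspace W2 ->
  (forall y, exists y1 y2, [/\ W1 y1, W2 y2 & y = y1 + y2]) ->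
  (forall y, W1 y -> W2 y -> y = 0) -> (forall y, span_fam g y) ->
  exists b, (forall k, W2 (b k)) /\ forall y, W2 y -> span_fam b y.
Proof.
move=> S1 S2 W_sum W12 g_span.
have proj k : {b | W2 b /\ W1 (g k - b)}.
  apply: constructive_indefinite_description.
  by have [y1 [y2 [W1y1 W2y2 ->]]] := W_sum (g k); exists y2; rewrite addrK.
exists (fun k => sval (proj k)); split=> [k | y W2y]; first by case: (proj k) => ? [].
have /span_famP[n [c yE]] := g_span y; apply/span_famP; exists n, c.
apply/eqP; rewrite -subr_eq0; apply/eqP/W12.
  rewrite yE -sumrB.
  apply: (subspace_sum (G := fun i => c i *: g i - c i *: sval (proj i)) S1) => i _.
  by rewrite -scalerBr; apply: subspaceZ => //; case: (proj i) => ? [].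
apply: subspaceB => //.
apply: (subspace_sum (G := fun i => c i *: sval (proj i)) S2) => i _.
by apply: subspaceZ => //; case: (proj i) => ? [].
Qed.

End SparseBases.

Section PolynomialAction.
Variables (F : fieldType) (V : lmodType F) (u : {linear V -> V}).

Lemma polyactE (p : {poly F}) (y : V) n :
  (size p <= n)%N -> polyact u p y = \sum_(i < n) p`_i *: iter i u y.
Proof.
move=> le_pn; rewrite /polyact (big_ord_widen n (fun i => p`_i *: iter i u y) le_pn).
rewrite big_mkcond /=; apply: eq_bigr => i _; case: ifP => // /negbT.
by rewrite -leqNgt => le_p_i; rewrite nth_default // scale0r.
Qed.

Lemma polyact0 (y : V) : polyact u 0 y = 0.
Proof. by rewrite /polyact size_poly0 big_ord0. Qed.

Lemma polyactp0 (p : {poly F}) : polyact u p 0 = 0.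
Proof.
rewrite /polyact big1 // => i _.
suff -> : iter i u 0 = 0 by rewrite scaler0.
by elim: (i : nat) => //= k ->; rewrite linear0.
Qed.

Lemma polyactD (p q : {poly F}) (y : V) :
  polyact u (p + q) y = polyact u p y + polyact u q y.
Proof.
set n := maxn (size p) (size q).
rewrite !(polyactE _ (n := n)) ?leq_maxl ?leq_maxr ?size_polyD // -big_split.
by apply: eq_bigr => i _; rewrite coefD scalerDl.
Qed.

Lemma polyactZ c (p : {poly F}) (y : V) :
  polyact u (c *: p) y = c *: polyact u p y.
Proof.
rewrite !(polyactE _ (n := size p)) ?size_scale_leq // scaler_sumr.
by apply: eq_bigr => i _; rewrite coefZ scalerA.
Qed.

Lemma polyactC (c : F) (y : V) : polyact u c%:P y = c *: y.
Proof. by rewrite (polyactE _ (n := 1)) ?size_polyC_leq1 // big_ord1 coefC. Qed.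

Lemma polyact1 (y : V) : polyact u 1 y = y.
Proof. by rewrite -polyC1 polyactC scale1r. Qed.

Lemma polyactMX (p : {poly F}) (y : V) :
  polyact u (p * 'X) y = u (polyact u p y).
Proof.
have [->|p_neq0] := eqVneq p 0; first by rewrite mul0r !polyact0 linear0.
rewrite (polyactE _ (n := (size p).+1)) ?size_mulX //.
rewrite big_ord_recl coefMX eqxx scale0r add0r (polyactE _ (n := size p)) //.
by rewrite linear_sum; apply: eq_bigr => i _; rewrite coefMX linearZ.
Qed.

Lemma polyactM (p q : {poly F}) (y : V) :
  polyact u (p * q) y = polyact u p (polyact u q y).
Proof.
elim/poly_ind: p => [|p c IHp]; first by rewrite mul0r !polyact0.
rewrite mulrDl mulrAC polyactD polyactMX IHp mul_polyC polyactZ.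
by rewrite polyactD polyactMX polyactC.
Qed.

Lemma polyactXn i (y : V) : polyact u 'X^i y = iter i u y.
Proof.
elim: i => [|i IHi]; first by rewrite expr0 polyact1.
by rewrite exprSr polyactMX IHi.
Qed.

Lemma polyact_sum n (c : nat -> F) (y : V) :
  polyact u (\poly_(i < n) c i) y = \sum_(i < n) c i *: iter i u y.
Proof.
rewrite (polyactE _ (n := n)) ?size_poly //.
by apply: eq_bigr => i _; rewrite coef_poly ltn_ord.
Qed.

Lemma generator_torsion_free (W : V -> Prop) (x : V) :
  generated_by u W x -> free_monogenous_nonzero u W ->
  forall p, polyact u p x = 0 -> p = 0.
Proof.
move=> genx [y [geny y_free]] p px0.
have gen_self z : generated_by u W z -> W z.
  by move=> genz; apply/genz; exists 1; rewrite polyact1.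
have [q xE] := (geny x).1 (gen_self x genx).
have [r yE] := (genx y).1 (gen_self y geny).
have /y_free/eqP : polyact u (p * q) y = 0 by rewrite polyactM -xE.
rewrite mulf_eq0 => /orP[/eqP // | /eqP q0].
have /y_free/eqP : polyact u 1 y = 0.
  by rewrite polyact1 yE xE q0 polyact0 polyactp0.
by rewrite oner_eq0.
Qed.

Lemma polyact_span (p : {poly F}) x : span_fam (fun i => iter i u x) (polyact u p x).
Proof. by exists (size p), (fun i => p`_i). Qed.

Section TorsionFree.
Variable x : V.
Hypothesis x_free : forall p, polyact u p x = 0 -> p = 0.

Lemma sparse_free_orbit : sparse_free (fun i => iter i u x).
Proof.
move=> n c; rewrite -polyact_sum => /x_free poly0 i lt_in.
have := congr1 (fun p : {poly F} => p`_i) poly0.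
by rewrite /= coef_poly lt_in coef0 => ->; rewrite scale0r.
Qed.

Lemma orbit_neq0 i : iter i u x != 0.
Proof.
apply/eqP; rewrite -polyactXn => /x_free/eqP.
by rewrite (negbTE (monic_neq0 (monicXn _ i))).
Qed.

End TorsionFree.

End PolynomialAction.

Section CyclicPerturbation.
Variables (F : fieldType) (V : lmodType F) (u : {linear V -> V}) (e f : nat -> V).
Variables (lam a : F).
Hypotheses (basis_free : sparse_free (interleave e f))
  (basis_span : forall y, span_fam (interleave e f) y).
Hypotheses (e_neq0 : forall i, e i != 0) (u_e : forall i, u (e i) = e i.+1)
  (u_f : forall k, u (f k) = lam *: f k).

Let block k := (a - 1) *: e k.*2 + e k.*2.+1 + f k.
Let image k := if f k == 0 then 0 else block k.
Let e_image i := if odd i then 0 else image i./2.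

Let image_vanish j : interleave e f j = 0 -> interleave e_image image j = 0.
Proof.
rewrite /interleave; case: ifP => _; first by rewrite /image => ->; rewrite eqxx.
by move/eqP; rewrite (negbTE (e_neq0 _)).
Qed.

Let v := sval (linear_extension basis_free basis_span image_vanish).

Let vE j : v (interleave e f j) = interleave e_image image j.
Proof. exact: svalP (linear_extension basis_free basis_span image_vanish) j. Qed.

Let v_e_double k : v (e k.*2) = image k.
Proof.
by rewrite -(interleave_double e f) vE interleave_double /e_image odd_double doubleK.
Qed.

Let v_e_doubleS k : v (e k.*2.+1) = 0.
Proof. by rewrite -(interleave_double e f) vE interleave_double /e_image /= odd_double. Qed.

Let v_f k : v (f k) = image k.
Proof. by rewrite -(interleave_doubleS e f) vE interleave_doubleS. Qed.

Let v_image k : v (image k) = a *: image k.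
Proof.
rewrite /image; case: eqP => [_ | /eqP f_neq0]; first by rewrite linear0 scaler0.
have -> : v (block k) = (a - 1) *: v (e k.*2) + v (e k.*2.+1) + v (f k).
  by rewrite /block !linearD linearZ.
rewrite v_e_double v_e_doubleS v_f /image (negbTE f_neq0).
by rewrite addr0 scalerBl scale1r subrK.
Qed.

Let v_square y : v (v y) = a *: v y.
Proof.
have S : subspace (fun y => v (v y) = a *: v y).
  split=> [|c y1 y2 Sy1 Sy2]; first by rewrite !linear0.
  by rewrite !linearP Sy1 Sy2.
apply: span_fam_min S _ (basis_span y) => j.
rewrite vE /interleave /e_image; case: (odd j); first exact: v_image.
by case: (odd j./2); [rewrite !linear0 | exact: v_image].
Qed.

Let orbit_spans y : span_fam (fun k => iter k (fun z => u z - v z) (e 0)) y.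
Proof.
set S := span_fam _; have SS : subspace S := span_fam_subspace _.
have S_stable z : S z -> S (u z - v z) := @span_orbit_stable _ _ (u \- v) _ z.
have S_even_step k : S (e k.*2) -> S (f k) /\ S (e k.*2.+1).
  move=> Se; have := S_stable _ Se; rewrite u_e v_e_double /image.
  case: eqP => [-> | /eqP f_neq0]; first by rewrite subr0; split=> //; case: SS.
  move=> S_e_block.
  have Sf : S (f k).
    have -> : f k = - (e k.*2.+1 - block k) - (a - 1) *: e k.*2.
      rewrite /block; set A := (a - 1) *: _.
      by rewrite opprB [A + _ + _]addrAC addrK [A + _]addrC addrK.
    by apply: subspaceB => //; [rewrite -scaleN1r | ]; apply: subspaceZ.
  split=> //; have := S_stable _ Sf; rewrite u_f v_f /image (negbTE f_neq0) => S_f_block.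
  have -> : e k.*2.+1 = (e k.*2.+1 - block k) + (lam *: f k - (lam *: f k - block k)).
    by rewrite opprB [lam *: f k + _]addrC !subrK.
  by apply: subspaceD => //; apply: subspaceB => //; apply: subspaceZ.
have S_odd_step k : S (e k.*2.+1) -> S (e k.+1.*2).
  by move/S_stable; rewrite u_e v_e_doubleS subr0 doubleS.
have S_basis k : [/\ S (e k.*2), S (f k) & S (e k.*2.+1)].
  elim: k => [|k [_ _ /S_odd_step Se]]; last by have [] := S_even_step _ Se.
  have Se0 : S (e 0) := span_fam_mem _ 0.
  by have [] := S_even_step 0 Se0.
have S_e i : S (e i).
  have [S_even _ S_odd] := S_basis i./2.
  by rewrite -[i]odd_double_half; case: (odd i).
apply: span_fam_min SS _ (basis_span y) => j.
by rewrite /interleave; case: (odd j); [have [] := S_basis j./2 | apply: S_e].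
Qed.

Lemma cyclic_perturbation : exists v : {linear V -> V},
  (forall y, v (v y) = a *: v y) /\
  (forall y, span_fam (fun k => iter k (fun z => u z - v z) (e 0)) y).
Proof. by exists v; split; [exact: v_square | exact: orbit_spans]. Qed.

End CyclicPerturbation.

Theorem lemma9 (F : fieldType) (V : lmodType F) (u : {linear V -> V})
    (V1 V2 : V -> Prop) (x : V) (a : F) :
  countably_infinite_dim V ->
  direct_sum_u u V1 V2 ->
  free_monogenous_nonzero u V1 ->
  (exists lam : F, forall y, V2 y -> u y = lam *: y) ->
  generated_by u V1 x ->
  exists v : {linear V -> V},
    (forall y, v (v y) = a *: v y) /\
    (forall y, span_fam (fun k => iter k (fun z => u z - v z) x) y).
Proof.
move=> [E [_ E_span]] [/submodule_subspace S1 /submodule_subspace S2 V_sum V12].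
move=> V1_free [lam u_V2] genx.
have x_free := generator_torsion_free genx V1_free.
pose e i := iter i u x.
have eV1 i : V1 (e i) by apply/genx; exists 'X^i; rewrite polyactXn.
have [b [bV2 b_span]] := span_summand S1 S2 V_sum V12 E_span.
have fV2 k : V2 (sift b k).
  by case: (sift_eq0_or_eq b k) => ->; [case: S2 | apply: bV2].
apply: (cyclic_perturbation (e := e) (f := sift b) (lam := lam)) => //.
- apply: (sparse_free_interleave S1 S2 V12 eV1 fV2).
  + exact: sparse_free_orbit x_free.
  + exact: sparse_free_sift.
- move=> y; have [y1 [y2 [/genx[p ->] /b_span y2_span ->]]] := V_sum y.
  apply: span_interleave; first exact: polyact_span.
  exact: span_fam_min (span_fam_subspace _) (span_sift b) y2_span.
- exact: orbit_neq0 x_free.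
- by move=> k; apply: u_V2.
Qed.
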